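(* Two factor sets of an ACI-matrix over a field $\mathbb{F}$ cannot be disjoint.
   Context: Let $\mathbb{F}$ be a field. An ACI-matrix is a matrix with entries in $\mathbb{F}[x_1,\dots,x_k]$ whose entries are polynomials of degree at most one and such that no indeterminate appears in two different columns. A completion is an assignment of values in $\mathbb{F}$ to all indeterminates; $\mathrm{maxRank}(N)$ is the maximum rank of a completion. ACI-matrices (and blocks) of size $0\times q$ ($q>0$, wide degenerate), $p\times 0$ ($p>0$, tall degenerate) and $0\times0$ (void) are allowed. $N$ is FRmR if $\mathrm{maxRank}(N)=\mathrm{rows}(N)$, FCmR if $\mathrm{maxRank}(N)=\mathrm{cols}(N)$; by convention tall degenerate is FRmR, wide degenerate is FCmR, void is both. For an $m\times n$ block matrix $\begin{bmatrix} A & B\\ 0 & C\end{bmatrix}$ with lower-left $r\times s$ zero block, the zero block is Big if $r+s>\max\{m,n\}$. For $F=\{f_1<\dots<f_s\}\subseteq\{1,\dots,n\}$ with complement $\{g_1<\dots<g_{n-s}\}$, $Q_F$ is the $n\times n$ permutation matrix such that $MQ_F$ has as columns $f_1,\dots,f_s,g_1,\dots,g_{n-s}$ of $M$ in that order. For an $m\times n$ ACI-matrix $M$, $F$ is a factor set of $M$ if there is a nonsingular constant $m\times m$ matrix $R$ with $RMQ_F=\begin{bmatrix} A & B\\ 0 & C\end{bmatrix}$, where $A$ has $\#F$ columns, the zero block is Big, $A$ is FRmR and $C$ is FCmR. *)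

From HB Require Import structures.
From mathcomp Require Import all_boot all_order all_algebra.
Set Implicit Arguments. Unset Strict Implicit. Unset Printing Implicit Defensive.
Import Order.TTheory GRing.Theory Num.Theory.
Local Open Scope ring_scope.

(* An m x n matrix with entries in F[x_1,...,x_k] of degree at most one:
   entry (i,j) is  aci_const i j + \sum_t aci_lin t i j * x_t. *)
Record acimx (F : fieldType) (m n k : nat) := ACImx {
  aci_const : 'M[F]_(m, n);
  aci_lin : 'I_k -> 'M[F]_(m, n)
}.

Section ACI.
Variables (F : fieldType) (k : nat).

Definition is_aci m n (M : acimx F m n k) : Prop :=
  forall (t : 'I_k) (i1 i2 : 'I_m) (j1 j2 : 'I_n),
    aci_lin M t i1 j1 != 0 -> aci_lin M t i2 j2 != 0 -> j1 = j2.

Definition completion m n (M : acimx F m n k) (x : 'I_k -> F) : 'M[F]_(m, n) :=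
  aci_const M + \sum_(t < k) x t *: aci_lin M t.

Definition is_maxRank m n (M : acimx F m n k) (r : nat) : Prop :=
  (exists x, \rank (completion M x) = r) /\
  (forall x, (\rank (completion M x) <= r)%N).

Definition FRmR m n (M : acimx F m n k) : Prop := n = 0%N \/ is_maxRank M m.
Definition FCmR m n (M : acimx F m n k) : Prop := m = 0%N \/ is_maxRank M n.

Definition aci_lmul p m n (R : 'M[F]_(p, m)) (M : acimx F m n k) : acimx F p n k :=
  ACImx (R *m aci_const M) (fun t => R *m aci_lin M t).
Definition aci_rmul m n q (M : acimx F m n k) (Q : 'M[F]_(n, q)) : acimx F m q k :=
  ACImx (aci_const M *m Q) (fun t => aci_lin M t *m Q).

Definition aci_sub m n p q (f : 'I_p -> 'I_m) (g : 'I_q -> 'I_n)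
  (M : acimx F m n k) : acimx F p q k :=
  ACImx (mxsub f g (aci_const M)) (fun t => mxsub f g (aci_lin M t)).

Definition aci_is_zero m n (M : acimx F m n k) : Prop :=
  aci_const M = 0 /\ forall t, aci_lin M t = 0.
End ACI.

(* Q_F : M *m Q_F has as columns f_1,...,f_s,g_1,...,g_{n-s} of M *)
Definition qF_index n (S : {set 'I_n}) (p : 'I_n) : 'I_n :=
  nth p (enum S ++ enum (~: S)) p.

Definition Q_F (F : fieldType) n (S : {set 'I_n}) : 'M[F]_n :=
  \matrix_(i, j) (i == qF_index S j)%:R.

Lemma card_set_le n (S : {set 'I_n}) : (#|S| <= n)%N.
Proof. by rewrite -[X in (_ <= X)%N]card_ord max_card. Qed.

(* index maps for the 2x2 block decomposition with lower-left r x s block *)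
Definition top_rows m r (hr : (r <= m)%N) (i : 'I_(m - r)) : 'I_m :=
  cast_ord (subnK hr) (lshift r i).
Definition bot_rows m r (hr : (r <= m)%N) (i : 'I_r) : 'I_m :=
  cast_ord (subnK hr) (rshift (m - r) i).
Definition left_cols n s (hs : (s <= n)%N) (j : 'I_s) : 'I_n :=
  cast_ord (subnKC hs) (lshift (n - s) j).
Definition right_cols n s (hs : (s <= n)%N) (j : 'I_(n - s)) : 'I_n :=
  cast_ord (subnKC hs) (rshift s j).

Definition factor_set (F : fieldType) k m n (M : acimx F m n k)
  (S : {set 'I_n}) : Prop :=
  exists (r : nat) (hr : (r <= m)%N) (R : 'M[F]_m),
    R \in unitmx /\
    let N := aci_rmul (aci_lmul R M) (Q_F F S) in
    let hs := card_set_le S in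
    [/\ aci_is_zero (aci_sub (bot_rows hr) (left_cols hs) N),
        (maxn m n < r + #|S|)%N,
        FRmR (aci_sub (top_rows hr) (left_cols hs) N)
      & FCmR (aci_sub (bot_rows hr) (right_cols hs) N)].

From mathcomp Require Import all_boot all_order all_algebra.
From mathcomp Require Import zify.
Set Implicit Arguments. Unset Strict Implicit. Unset Printing Implicit Defensive.
Import GRing.Theory.
Local Open Scope ring_scope.

(* Suppose F1 and F2 are disjoint factor sets.  Since the block C of F1 is
   FCmR, some completion X has linearly independent columns outside F1, in
   particular those indexed by F2.  On the other hand, in every completion the
   columns indexed by F2 are mapped by the invertible R2 to columns vanishing
   on the last r2 rows, so they span a space of dimension at most m - r2,
   which is smaller than #|F2| because the zero block of F2 is Big. *)

Lemma Q_F_colsub (F : fieldType) n (S : {set 'I_n}) :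
  Q_F F S = colsub (qF_index S) 1%:M.
Proof. by apply/matrixP => i j; rewrite !mxE. Qed.

Lemma qF_index_left n (S : {set 'I_n}) (j : 'I_#|S|) :
  qF_index S (left_cols (card_set_le S) j) = enum_val j.
Proof.
rewrite /qF_index /= nth_cat -cardE ltn_ord.
by rewrite (enum_val_nth (left_cols (card_set_le S) j)).
Qed.

Lemma qF_index_right_onto n (S : {set 'I_n}) (p : 'I_n) : p \notin S ->
  exists j, qF_index S (right_cols (card_set_le S) j) = p.
Proof.
move=> pS; have pSC : p \in enum (~: S) by rewrite mem_enum inE.
have p_idx : (index p (enum (~: S)) < n - #|S|)%N.
  by rewrite -[X in (_ < X - _)%N](card_ord n) -(cardsC S) addKn cardE
             index_mem.
exists (Ordinal p_idx); rewrite /qF_index /= nth_cat -cardE ltnNge leq_addr /=.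
by rewrite addKn nth_index.
Qed.

Lemma top_or_bot_row m r (hr : (r <= m)%N) (i : 'I_m) :
  (exists l, i = top_rows hr l) \/ (exists l, i = bot_rows hr l).
Proof.
case: (ltnP i (m - r)) => i_top.
  by left; exists (Ordinal i_top); apply: val_inj.
have i_bot : (i - (m - r) < r)%N by have := ltn_ord i; lia.
by right; exists (Ordinal i_bot); apply: val_inj => /=; lia.
Qed.

Section Completions.
Variables (F : fieldType) (k : nat).

Lemma completion_lmul m n p (R : 'M[F]_(p, m)) (M : acimx F m n k) x :
  completion (aci_lmul R M) x = R *m completion M x.
Proof.
rewrite /completion /= mulmxDr mulmx_sumr; congr (_ + _).
by apply: eq_bigr => t _; rewrite scalemxAr.
Qed.

Lemma completion_rmul m n q (M : acimx F m n k) (Q : 'M[F]_(n, q)) x :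
  completion (aci_rmul M Q) x = completion M x *m Q.
Proof.
rewrite /completion /= mulmxDl mulmx_suml; congr (_ + _).
by apply: eq_bigr => t _; rewrite scalemxAl.
Qed.

Lemma completion_mxsub m n p q (f : 'I_p -> 'I_m) (g : 'I_q -> 'I_n)
    (M : acimx F m n k) x :
  completion (aci_sub f g M) x = mxsub f g (completion M x).
Proof.
apply/matrixP => i j; rewrite /completion /= !mxE !summxE; congr (_ + _).
by apply: eq_bigr => t _; rewrite !mxE.
Qed.

Lemma completion_aci_zero m n (M : acimx F m n k) x :
  aci_is_zero M -> completion M x = 0.
Proof.
case=> M0 lin0; rewrite /completion M0 add0r big1 // => t _.
by rewrite lin0 scaler0.
Qed.

Lemma completion_block m n p q (R : 'M[F]_m) (S : {set 'I_n})
    (f : 'I_p -> 'I_m) (g : 'I_q -> 'I_n) (M : acimx F m n k) x :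
  completion (aci_sub f g (aci_rmul (aci_lmul R M) (Q_F F S))) x =
  mxsub f (qF_index S \o g) (R *m completion M x).
Proof.
rewrite completion_mxsub completion_rmul completion_lmul Q_F_colsub.
by rewrite mulmx_colsub mulmx1; apply/matrixP => i j; rewrite !mxE.
Qed.

End Completions.

Section Rank.
Variable F : fieldType.

Lemma row_full_colsub r p q (C : 'M[F]_(r, p)) (h : 'I_q -> 'I_p) :
  row_full C -> injective h -> row_full (colsub h C).
Proof.
move=> /row_fullP[B BC] h_inj; apply/row_fullP.
exists (rowsub h 1%:M *m B); rewrite -mulmxA mulmx_colsub BC -mxsub_mul mulmx1.
by apply/matrixP => i j; rewrite !mxE (inj_eq h_inj).
Qed.

Lemma mxrankMl_unit m n (R : 'M[F]_m) (B : 'M[F]_(m, n)) :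
  R \in unitmx -> \rank (R *m B) = \rank B.
Proof. by rewrite -row_full_unit => /(eqmxMfull B) ->. Qed.

Lemma mxrank_bot_rows0 m r q (hr : (r <= m)%N) (W : 'M[F]_(m, q)) :
  rowsub (bot_rows hr) W = 0 -> (\rank W <= m - r)%N.
Proof.
move=> W0; have W_top : (W <= rowsub (top_rows hr) W)%MS.
  apply/row_subP => i; case: (top_or_bot_row hr i) => [[l ->]|[l ->]].
    by rewrite -row_rowsub row_sub.
  by rewrite -row_rowsub W0 row0 sub0mx.
exact: leq_trans (mxrankS W_top) (rank_leq_row _).
Qed.

End Rank.

Section FactorSet.
Variables (F : fieldType) (k m n : nat) (M : acimx F m n k) (S : {set 'I_n}).
Hypothesis S_factor : factor_set M S.

Lemma factor_set_cols_dependent x :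
  ~~ row_full (colsub (enum_val : 'I_#|S| -> 'I_n) (completion M x)).
Proof.
have [r [hr [R [R_unit [R_zero big _ _]]]]] := S_factor.
set X := completion M x.
have := completion_aci_zero x R_zero; rewrite completion_block => block0.
have bot0 :
    rowsub (bot_rows hr) (R *m colsub (enum_val : 'I_#|S| -> 'I_n) X) = 0.
  apply/matrixP => i j; move/matrixP/(_ i j): block0.
  by rewrite mulmx_colsub !mxE /= qF_index_left.
have := mxrank_bot_rows0 bot0; rewrite mxrankMl_unit // /row_full.
by move: big; lia.
Qed.

Lemma factor_set_cols_free : exists x, forall q (g : 'I_q -> 'I_n),
  injective g -> (forall j, g j \notin S) ->
  row_full (colsub g (completion M x)).
Proof.
have [r [hr [R [R_unit [_ big _ [r0 | [[x C_full] _]]]]]]] := S_factor.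
  by move: big (card_set_le S); rewrite r0; lia.
rewrite completion_block in C_full; set X := completion M x in C_full *.
set cols := qF_index S \o right_cols (card_set_le S) in C_full.
exists x => q g g_inj gNS.
have [h hE] : exists h : 'I_q -> 'I_(n - #|S|), forall j, cols (h j) = g j.
  apply: (@fin_all_exists _ (fun=> 'I_(n - #|S|)) (fun j l => cols l = g j)).
  by move=> j; apply: qF_index_right_onto.
have h_inj : injective h by move=> i j hij; apply: g_inj; rewrite -!hE hij.
have /row_full_colsub/(_ h_inj) : row_full (mxsub (bot_rows hr) cols (R *m X)).
  by rewrite /row_full C_full.
have -> : colsub h (mxsub (bot_rows hr) cols (R *m X)) =
          rowsub (bot_rows hr) (R *m colsub g X).
  by rewrite mulmx_colsub; apply/matrixP => i j; rewrite !mxE /= hE.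
move=> /eqP rank_q; rewrite /row_full eqn_leq rank_leq_col.
rewrite -[LHS in (LHS <= _)%N]rank_q -(mxrankMl_unit _ R_unit).
by rewrite mxrankS ?rowsub_sub.
Qed.

End FactorSet.

Theorem lemma5p1 (F : fieldType) (k m n : nat) (M : acimx F m n k)
  (F1 F2 : {set 'I_n}) :
  is_aci M -> factor_set M F1 -> factor_set M F2 -> ~ [disjoint F1 & F2].
Proof.
move=> _ F1_factor F2_factor F12_disj.
have [x F1C_free] := factor_set_cols_free F1_factor.
have /negP[] := factor_set_cols_dependent F2_factor x.
apply: F1C_free => [|j]; first exact: enum_val_inj.
by rewrite (disjointFl F12_disj) ?enum_valP.
Qed.
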